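(* Let $X$ be a compact Hausdorff space and let $a\in\mathrm{M}_m(\mathrm{C}(X))$ be block diagonal, $a=\mathrm{diag}(0_k,a_1,\dots,a_n)$, where $0_k$ is the $k\times k$ zero matrix and $a_i\in\mathrm{M}_{k_i}(\mathrm{C}(X))$ for natural numbers $k_1,\dots,k_n$ with $k+\sum_i k_i=m$. If $k>\max_{1\le i\le n}k_i$, then $a$ can be approximated arbitrarily closely in norm by invertible elements of $\mathrm{M}_m(\mathrm{C}(X))$. *)

(* Complex numbers are R[i] (mathcomp-real-closed)
   over an arbitrary R : realType; R[i] is a numFieldType, hence carries its
   canonical normed (metric) topology via numFieldNormedType. *)
From HB Require Import structures.
From mathcomp Require Import all_boot all_order all_algebra.
From mathcomp Require Import all_classical all_reals topology normedtype.
From mathcomp Require Import complex.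
Set Implicit Arguments. Unset Strict Implicit. Unset Printing Implicit Defensive.
Import Order.TTheory GRing.Theory Num.Theory.
Import numFieldNormedType.Exports.
Local Open Scope classical_set_scope.
Local Open Scope ring_scope.

Section Defs.
Variable R : realType.
Local Notation C := R[i].

Definition vnorm m (v : 'cV[C]_m) : R :=
  Num.sqrt (\sum_(i < m) ((complex.Re (v i ord0)) ^+ 2 + (complex.Im (v i ord0)) ^+ 2)).

Definition opnorm m (A : 'M[C]_m) : R :=
  sup [set vnorm (A *m v) | v in [set v : 'cV[C]_m | vnorm v <= 1]].

Variable X : topologicalType.

(* An element of M_m(C(X)), represented as a function X -> M_m(C)
   all of whose entries are continuous. *)
Definition is_CXmx m (f : X -> 'M[C]_m) : Prop :=
  forall i j : 'I_m, continuous (fun x => (f x i j : (R[i])^o)).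

Definition CXmx_norm m (f : X -> 'M[C]_m) : R :=
  sup [set opnorm (f x) | x in [set: X]].

Definition CXmx_invertible m (f : X -> 'M[C]_m) : Prop :=
  exists g : X -> 'M[C]_m, is_CXmx g /\
    (forall x, f x *m g x = 1%:M) /\ (forall x, g x *m f x = 1%:M).

End Defs.

From HB Require Import structures.
From mathcomp Require Import all_boot all_order all_algebra all_fingroup.
From mathcomp Require Import all_classical all_reals topology normedtype.
From mathcomp Require Import complex zify ring lra.
Import Order.TTheory GRing.Theory Num.Theory.
Import numFieldNormedType.Exports.
Local Open Scope classical_set_scope.
Local Open Scope ring_scope.
Set Implicit Arguments.
Unset Strict Implicit.
Unset Printing Implicit Defensive.

(* Let P be the permutation matrix shifting the coordinates cyclically by k.
   The first k rows of a vanish and each block a_i has size at most k, so P a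
   is strictly upper triangular, hence nilpotent.  For d > 0 the matrix
   a - d P^-1 = -d P^-1 (1 - d^-1 P a) is therefore invertible, its inverse
   being a finite Neumann series with continuous entries, and it lies at
   distance d from a. *)

Section ContinuousEntries.
Variables (R : realType) (X : topologicalType).
Local Notation C := R[i].

Definition continuousC (f : X -> C) := continuous (fun x => f x : C^o).

Lemma continuousC_cst (c : C) : continuousC (fun _ => c).
Proof. exact: cst_continuous. Qed.

Lemma continuousCD f g :
  continuousC f -> continuousC g -> continuousC (fun x => f x + g x).
Proof. by move=> cf cg x; apply: continuousD; [apply: cf | apply: cg]. Qed.

Lemma continuousCM f g :
  continuousC f -> continuousC g -> continuousC (fun x => f x * g x).
Proof. by move=> cf cg x; apply: continuousM; [apply: cf | apply: cg]. Qed.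

Lemma continuousC_sum (I : Type) (r : seq I) (P : pred I) (f : I -> X -> C) :
  (forall i, continuousC (f i)) ->
  continuousC (fun x => \sum_(i <- r | P i) f i x).
Proof.
move=> cf; elim: r => [|i r IHr].
  by under eq_fun do rewrite big_nil; exact: continuousC_cst.
under eq_fun do rewrite big_cons.
case: (P i); last exact: IHr.
exact: continuousCD (cf i) IHr.
Qed.

Lemma continuousC_conform_mx m1 n1 m2 n2 (F : X -> 'M[C]_(m1, n1)) r c :
  (forall r' c', continuousC (fun x => F x r' c')) ->
  continuousC (fun x => conform_mx (0 : 'M_(m2, n2)) (F x) r c).
Proof.
rewrite /conform_mx => cF; case: (m1 =P m2) => e1; case: (n1 =P n2) => e2;
  first by under eq_fun do rewrite castmxE; apply: cF.
all: by under eq_fun do rewrite mxE; exact: continuousC_cst.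
Qed.

Variable m : nat.
Implicit Types f g : X -> 'M[C]_m.

Lemma is_CXmx_cst (A : 'M[C]_m) : is_CXmx (fun _ : X => A).
Proof. by move=> i j; apply: continuousC_cst. Qed.

Lemma is_CXmxB f g : is_CXmx f -> is_CXmx g -> is_CXmx (fun x => f x - g x).
Proof.
move=> cf cg i j; under eq_fun do rewrite !mxE.
by move=> x; apply: continuousB; [apply: cf | apply: cg].
Qed.

Lemma is_CXmxM f g : is_CXmx f -> is_CXmx g -> is_CXmx (fun x => f x *m g x).
Proof.
move=> cf cg i j; under eq_fun do rewrite mxE.
by apply: continuousC_sum => l; apply: continuousCM.
Qed.

Lemma is_CXmxX f p : is_CXmx f -> is_CXmx (fun x => f x ^+ p).
Proof.
move=> cf; elim: p => [|p IHp].
  by under eq_fun do rewrite expr0; apply: is_CXmx_cst.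
by under eq_fun do rewrite exprS; apply: is_CXmxM.
Qed.

Lemma is_CXmx_sum (I : Type) (r : seq I) (P : pred I) (f : I -> X -> 'M[C]_m) :
  (forall i, is_CXmx (f i)) -> is_CXmx (fun x => \sum_(i <- r | P i) f i x).
Proof.
move=> cf i j; under eq_fun do rewrite summxE.
by apply: continuousC_sum => l; apply: cf.
Qed.

End ContinuousEntries.

Lemma mxdiagE (V : nmodType) n (p_ : 'I_n -> nat) (B : forall i, 'M[V]_(p_ i)) u v :
  (\mxdiag_i B i) u v =
    if tagnat.sig1 u == tagnat.sig1 v then
      conform_mx 0 (B (tagnat.sig1 u)) (tagnat.sig2 u) (tagnat.sig2 v)
    else 0.
Proof. by rewrite /mxdiag /mxblock mxE; case: (_ == _) => //; rewrite mxE. Qed.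

Section BlockDiagonalContinuity.
Variables (R : realType) (X : topologicalType).
Local Notation C := R[i].

Lemma is_CXmx_mxdiag n (p_ : 'I_n -> nat) (B : forall i, X -> 'M[C]_(p_ i)) :
  (forall i, is_CXmx (B i)) -> is_CXmx (fun x => \mxdiag_i B i x).
Proof.
move=> cB u v; under eq_fun do rewrite mxdiagE.
case: (_ == _); last exact: continuousC_cst.
by apply: continuousC_conform_mx; apply: cB.
Qed.

Lemma is_CXmx_block_mx0 k s (D : X -> 'M[C]_s) :
  is_CXmx D -> is_CXmx (fun x => (block_mx 0 0 0 (D x) : 'M_(k + s))).
Proof.
move=> cD u v; rewrite -(fintype.splitK u) -(fintype.splitK v).
case: (fintype.split u) => u'; case: (fintype.split v) => v' /=.
- by under eq_fun do rewrite block_mxEul mxE; apply: continuousC_cst.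
- by under eq_fun do rewrite block_mxEur mxE; apply: continuousC_cst.
- by under eq_fun do rewrite block_mxEdl mxE; apply: continuousC_cst.
- by under eq_fun do rewrite block_mxEdr; apply: cD.
Qed.

End BlockDiagonalContinuity.

Lemma mxdiag_neq0_lt (V : nmodType) n (p_ : 'I_n -> nat) (B : forall i, 'M[V]_(p_ i))
    (K : nat) u v :
  (forall i, p_ i <= K)%N -> (\mxdiag_i B i) u v != 0 -> (u < v + K)%N.
Proof.
move=> p_le_K; rewrite mxdiagE.
case: (tagnat.sig1 u =P tagnat.sig1 v) => [same_block _|_]; last by rewrite eqxx.
have offset_v : (\sum_(i < n | i < tagnat.sig1 v) p_ i =
                 \sum_(i < n | i < tagnat.sig1 u) p_ i)%N by rewrite same_block.
have := tagnat.rect u; have := tagnat.rect v; rewrite offset_v.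
have := ltn_ord (tagnat.sig2 u); have := p_le_K (tagnat.sig1 u); lia.
Qed.

Lemma block_mx0_neq0 (V : nmodType) k s (D : 'M[V]_s) u v :
  (forall u v, D u v != 0 -> (u < v + k)%N) ->
  (block_mx 0 0 0 D : 'M_(k + s)) u v != 0 -> (k <= u < v + k)%N.
Proof.
move=> D_band; rewrite -(fintype.splitK u) -(fintype.splitK v).
case: (fintype.split u) => u'; case: (fintype.split v) => v' /=.
- by rewrite block_mxEul mxE eqxx.
- by rewrite block_mxEur mxE eqxx.
- by rewrite block_mxEdl mxE eqxx.
by rewrite block_mxEdr => /D_band; lia.
Qed.

Definition strictly_upper_mx (V : nmodType) m (A : 'M[V]_m) :=
  forall i j, A i j != 0 -> (i < j)%N.

Section StrictlyUpper.
Variables (F : pzRingType) (m : nat).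
Implicit Types N : 'M[F]_m.

Lemma strictly_upper_mxX N p i j :
  strictly_upper_mx N -> (N ^+ p) i j != 0 -> (i + p <= j)%N.
Proof.
move=> N_upper; elim: p i j => [|p IHp] i j.
  by rewrite expr0 mxE addn0; case: (i =P j) => [->|]; rewrite ?eqxx.
rewrite exprS mxE; apply: contraNT => lt_j_ip.
rewrite big1 // => l _.
have [->|Nil] := eqVneq (N i l) 0; first by rewrite mul0r.
have [->|Nplj] := eqVneq ((N ^+ p) l j) 0; first by rewrite mulr0.
by have := N_upper _ _ Nil; have := IHp _ _ Nplj; lia.
Qed.

Lemma strictly_upper_mxZ c N : strictly_upper_mx N -> strictly_upper_mx (c *: N).
Proof.
move=> N_upper i j; rewrite mxE => cN_neq0; apply: N_upper.
by apply: contraNneq cN_neq0 => ->; rewrite mulr0.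
Qed.

Lemma strictly_upper_mx_nilpotent N : strictly_upper_mx N -> N ^+ m = 0.
Proof.
move=> N_upper; apply/matrixP => i j; rewrite mxE; apply/eqP.
by apply: contraTT (ltn_ord j) => /(strictly_upper_mxX N_upper); rewrite -leqNgt; lia.
Qed.

End StrictlyUpper.

Section CyclicShift.
Variables (m k : nat).

Definition shift_ord (i : 'I_m) : 'I_m :=
  Ordinal (ltn_pmod (i + k)%N (leq_ltn_trans (leq0n i) (ltn_ord i))).

Lemma shift_ord_inj : injective shift_ord.
Proof.
move=> i j /(congr1 val) /= /eqP; rewrite eqn_modDr => /eqP.
by rewrite !modn_small // => /val_inj.
Qed.

Definition shift_perm : 'S_m := perm shift_ord_inj.

Lemma shift_permE i : shift_perm i = ((i + k) %% m)%N :> nat.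
Proof. by rewrite permE. Qed.

(* The rows of A that the shift wraps around are among its first k rows. *)
Lemma row_perm_shift_strictly_upper (V : nmodType) (A : 'M[V]_m) :
  (forall u v, A u v != 0 -> (k <= u < v + k)%N) ->
  strictly_upper_mx (row_perm shift_perm A).
Proof.
move=> A_band i j; rewrite mxE => /A_band; rewrite shift_permE.
have := ltn_ord i; case: (ltnP (i + k) m) => [lt_ik_m|le_m_ik].
  by rewrite modn_small //; lia.
rewrite -(subnK le_m_ik) modnDr; have := leq_mod (i + k - m) m; lia.
Qed.

End CyclicShift.

Section Invertibility.
Variables (R : realType) (X : topologicalType) (m : nat).
Local Notation C := R[i].

Lemma CXmx_invertibleP (f g : X -> 'M[C]_m) :
  is_CXmx g -> (forall x, f x *m g x = 1%:M) -> CXmx_invertible f.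
Proof. by move=> cg fg; exists g; split=> //; split=> // x; apply: mulmx1C. Qed.

Lemma CXmx_invertible_unit_nilpotent (U : 'M[C]_m) (N : X -> 'M[C]_m) :
  U \in unitmx -> is_CXmx N -> (forall x, N x ^+ m = 0) ->
  CXmx_invertible (fun x => U *m (1 - N x)).
Proof.
move=> U_unit cN N_nil.
apply: (@CXmx_invertibleP _ (fun x => (\sum_(p < m) N x ^+ p) *m invmx U)).
  apply: is_CXmxM; last exact: is_CXmx_cst.
  by apply: is_CXmx_sum => p; apply: is_CXmxX.
move=> x; have neumann : (1 - N x) * \sum_(p < m) N x ^+ p = 1.
  by rewrite -opprB mulNr -subrX1 N_nil sub0r opprK.
by rewrite mulmxA -(mulmxA U) mulmxE neumann mulr1 -mulmxE mulmxV.
Qed.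

End Invertibility.

Section Norms.
Variable R : realType.
Local Notation C := R[i].
Local Open Scope complex_scope.

Lemma vnorm0 m : vnorm (0 : 'cV[C]_m) = 0.
Proof. by rewrite /vnorm big1 ?sqrtr0 // => i _; rewrite mxE /= expr0n addr0. Qed.

Lemma vnorm_row_perm m (s : 'S_m) (v : 'cV[C]_m) : vnorm (row_perm s v) = vnorm v.
Proof.
rewrite /vnorm; under eq_bigr do rewrite mxE.
by rewrite [in RHS](reindex_inj (@perm_inj _ s)).
Qed.

Lemma vnormZ_real m (c : R) (v : 'cV[C]_m) : vnorm (c%:C *: v) = `|c| * vnorm v.
Proof.
rewrite /vnorm; under eq_bigr => i _.
  rewrite mxE (_ : complex.Re _ ^+ 2 + _ =
    c ^+ 2 * (complex.Re (v i ord0) ^+ 2 + complex.Im (v i ord0) ^+ 2)).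
    by over.
  by case: (v i ord0) => x y /=; ring.
by rewrite -mulr_sumr sqrtrM ?sqr_ge0 // sqrtr_sqr.
Qed.

Lemma opnorm_le m (A : 'M[C]_m) (r : R) :
  (forall v, vnorm v <= 1 -> vnorm (A *m v) <= r) -> opnorm A <= r.
Proof.
move=> A_le; apply: ge_sup; last by move=> _ [v v_le1 <-]; apply: A_le.
by exists (vnorm (A *m 0)), 0 => //=; rewrite vnorm0.
Qed.

Lemma opnorm_scale_perm m (c : R) (s : 'S_m) :
  opnorm (c%:C *: perm_mx s) <= `|c|.
Proof.
apply: opnorm_le => v v_le1.
rewrite -scalemxAl -row_permE vnormZ_real vnorm_row_perm.
by rewrite ler_piMr.
Qed.

Lemma CXmx_norm_le (X : topologicalType) m (f : X -> 'M[C]_m) (r : R) :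
  0 <= r -> (forall x, opnorm (f x) <= r) -> CXmx_norm f <= r.
Proof.
move=> r_ge0 f_le; have [[x _]|noX] := pselect (exists x : X, True).
  by apply: ge_sup; [exists (opnorm (f x)), x | move=> _ [y _ <-]].
rewrite /CXmx_norm (_ : [set _ | x in _] = set0) ?sup0 //.
by apply/seteqP; split=> // y [x _ _]; apply: noX; exists x.
Qed.

End Norms.

Theorem lemma4p2 (R : realType) (X : topologicalType)
    (hcpt : compact [set: X]) (hT2 : hausdorff_space X)
    (k n : nat) (ks : 'I_n -> nat)
    (a_ : forall i : 'I_n, X -> 'M[R[i]]_(ks i))
    (ha : forall i : 'I_n, is_CXmx (a_ i))
    (hk : (\max_(i < n) ks i < k)%N) :
  let a : X -> 'M[R[i]]_(k + \sum_(i < n) ks i) :=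
    fun x => block_mx 0 0 0 (\mxdiag_(i < n) a_ i x) in
  forall eps : R, 0 < eps ->
  exists b : X -> 'M[R[i]]_(k + \sum_(i < n) ks i),
    is_CXmx b /\ CXmx_invertible b /\ CXmx_norm (fun x => a x - b x) < eps.
Proof.
move=> a eps eps_gt0.
pose s := shift_perm (k + \sum_(i < n) ks i) k.
pose d : R[i] := (eps / 2)%:C%C.
have d_neq0 : d != 0 by apply: lt0r_neq0; rewrite -[0]/((0 : R)%:C)%C ltcR; lra.
have a_cont : is_CXmx a by apply: is_CXmx_block_mx0; apply: is_CXmx_mxdiag.
have a_band x u v : a x u v != 0 -> (k <= u < v + k)%N.
  apply: block_mx0_neq0 => {}u {}v; apply: mxdiag_neq0_lt => i.
  exact/ltnW/(leq_ltn_trans (leq_bigmax i)).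
have factor x : a x - d *: perm_mx s^-1 =
                (- d *: perm_mx s^-1) *m (1 - (d^-1 *: perm_mx s) *m a x).
  rewrite mulmxBr mulmx1 mulmxA -scalemxAl -scalemxAr scalerA mulNr divff //.
  by rewrite -perm_mxM mulVg perm_mx1 scaleN1r mulNmx mul1mx opprK scaleNr addrC.
exists (fun x => a x - d *: perm_mx s^-1); split; [|split].
- by apply: is_CXmxB; [exact: a_cont | exact: is_CXmx_cst].
- rewrite (funext factor); apply: CXmx_invertible_unit_nilpotent.
  + by rewrite unitmxZ ?unitmx_perm // unitrN unitfE.
  + by apply: is_CXmxM; [exact: is_CXmx_cst | exact: a_cont].
  + move=> x; rewrite -scalemxAl -row_permE.
    apply/strictly_upper_mx_nilpotent/strictly_upper_mxZ.
    exact/row_perm_shift_strictly_upper/a_band.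
- have -> : (fun x => a x - (a x - d *: perm_mx s^-1)) = fun _ => d *: perm_mx s^-1.
    by apply: funext => x; rewrite subKr.
  apply: (@le_lt_trans _ _ `|eps / 2|); last by rewrite ger0_norm; lra.
  by apply: CXmx_norm_le => // x; apply: opnorm_scale_perm.
Qed.
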